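(* Let $n\ge 4$, $s_k=\sin(k\pi/n)$, and let $D_1,\dots,D_{n-1}$ be positive numbers satisfying $D_kD_{l-j}\ge D_jD_{l-k}+D_lD_{k-j}$ for all integers $1\le j<k<l\le n-1$, together with $D_1=D_{n-1}=s_1$. Let $a_k=\log(D_k/s_k)$. Then $a_1=a_{n-1}=0$, and for every $k\in\{2,\dots,n-2\}$ the number $q_k=s_{k+1}s_{k-1}/s_k^2$ satisfies $0<q_k<1$ and $$a_k\ \ge\ q_k\,\frac{a_{k+1}+a_{k-1}}{2}.$$ *)

From Stdlib Require Import Reals Lra Lia.
Open Scope R_scope.

Definition s (n k : nat) : R := sin (INR k * PI / INR n).

Definition a (n : nat) (D : nat -> R) (k : nat) : R := ln (D k / s n k).

Definition q (n k : nat) : R := s n (k + 1) * s n (k - 1) / (s n k ^ 2).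

From Stdlib Require Import Reals Lra Lia.
Open Scope R_scope.

(* Put x_k = D_k / s_k, so that a_k = ln x_k.  The Ptolemy-type
   hypothesis with (j, k, l) = (1, k, k+1) and D_1 = s_1 gives
       D_k^2 >= s_1^2 + D_{k+1} D_{k-1},
   while the sine identity sin(x+h) sin(x-h) = sin^2 x - sin^2 h gives the
   equality case  s_k^2 = s_1^2 + s_{k+1} s_{k-1}.  Dividing the first by s_k^2
   and using the second yields  x_k^2 >= (1 - q_k) + q_k x_{k+1} x_{k-1},  where
   0 < q_k < 1 because s_1 > 0.  Concavity of ln (the chord inequality
   ln(1 - q + q y) >= q ln y) then gives 2 a_k >= q_k (a_{k+1} + a_{k-1}). *)

Lemma ln_le (x y : R) : 0 < x -> x <= y -> ln x <= ln y.
Proof.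
  intros Hx Hxy. destruct (Rle_lt_or_eq_dec _ _ Hxy) as [Hlt | Heq].
  - left. now apply ln_increasing.
  - subst. lra.
Qed.

Lemma exp_tangent (u v : R) : exp v * (1 + (u - v)) <= exp u.
Proof.
  replace (exp u) with (exp v * exp (u - v))
    by (rewrite <- exp_plus; f_equal; ring).
  apply Rmult_le_compat_l.
  - left. apply exp_pos.
  - apply exp_ineq1_le.
Qed.

(* Convexity of exp between 0 and t: averaging the tangent inequalities at
   q t taken at the points t and 0 with weights q and 1 - q. *)
Lemma exp_convex_chord (q t : R) : 0 <= q <= 1 ->
  exp (q * t) <= 1 - q + q * exp t.
Proof.
  intros Hq.
  assert (Ht := exp_tangent t (q * t)).
  assert (H0 := exp_tangent 0 (q * t)). rewrite exp_0 in H0.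
  assert (Hw1 := Rmult_le_compat_l q _ _ (proj1 Hq) Ht).
  assert (Hw0 : 0 <= 1 - q) by lra.
  assert (Hw2 := Rmult_le_compat_l (1 - q) _ _ Hw0 H0).
  lra.
Qed.

Lemma ln_concave_chord (q y : R) : 0 <= q <= 1 -> 0 < y ->
  q * ln y <= ln (1 - q + q * y).
Proof.
  intros Hq Hy.
  rewrite <- (ln_exp (q * ln y)).
  apply ln_le; [apply exp_pos|].
  rewrite <- (exp_ln y) at 2 by assumption.
  now apply exp_convex_chord.
Qed.

Lemma sin_plus_mul_sin_minus (x h : R) :
  sin (x + h) * sin (x - h) = sin x ^ 2 - sin h ^ 2.
Proof.
  rewrite sin_plus, sin_minus.
  assert (Hx := sin2_cos2 x). assert (Hh := sin2_cos2 h).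
  unfold Rsqr in *. nra.
Qed.

Lemma s_pos (n k : nat) : (1 <= k)%nat -> (k < n)%nat -> 0 < s n k.
Proof.
  intros Hk Hkn. unfold s.
  assert (0 < INR k) by (apply lt_0_INR; lia).
  assert (INR k < INR n) by (apply lt_INR; lia).
  assert (Hpi := PI_RGT_0).
  apply sin_gt_0.
  - apply Rdiv_lt_0_compat; nra.
  - apply Rmult_lt_reg_r with (INR n); [lra|].
    unfold Rdiv. rewrite Rmult_assoc, Rinv_l; nra.
Qed.

Lemma s_sym (n : nat) : (1 <= n)%nat -> s n (n - 1) = s n 1.
Proof.
  intros Hn. unfold s. rewrite minus_INR by lia.
  assert (0 < INR n) by (apply lt_0_INR; lia).
  replace ((INR n - INR 1) * PI / INR n) with (PI - INR 1 * PI / INR n)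
    by (field; lra).
  apply sin_PI_x.
Qed.

Lemma s_ptolemy (n k : nat) : (1 <= k)%nat -> (1 <= n)%nat ->
  s n k ^ 2 = s n 1 ^ 2 + s n (k + 1) * s n (k - 1).
Proof.
  intros Hk Hn. unfold s.
  assert (0 < INR n) by (apply lt_0_INR; lia).
  replace (INR (k + 1) * PI / INR n) with (INR k * PI / INR n + INR 1 * PI / INR n)
    by (rewrite plus_INR; field; lra).
  replace (INR (k - 1) * PI / INR n) with (INR k * PI / INR n - INR 1 * PI / INR n)
    by (rewrite minus_INR by lia; field; lra).
  rewrite sin_plus_mul_sin_minus. ring.
Qed.

Lemma a_eq_0 (n : nat) (D : nat -> R) (k : nat) :
  0 < s n k -> D k = s n k -> a n D k = 0.
Proof.
  intros Hs HD. unfold a. rewrite HD, Rdiv_diag by lra. apply ln_1.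
Qed.

Section OneStep.

(* The data at a single index k: sines sm, sk, sp at k-1, k, k+1 and the
   values Dm, Dk, Dp of D there, with s1 = s_1 = D_1. *)
Variables s1 sm sk sp Dm Dk Dp : R.
Hypothesis pos_s1 : 0 < s1.
Hypothesis pos_sm : 0 < sm.
Hypothesis pos_sk : 0 < sk.
Hypothesis pos_sp : 0 < sp.
Hypothesis pos_Dm : 0 < Dm.
Hypothesis pos_Dk : 0 < Dk.
Hypothesis pos_Dp : 0 < Dp.
Hypothesis sines_eq : sk ^ 2 = s1 ^ 2 + sp * sm.
Hypothesis ptolemy_D : Dk * Dk >= s1 * s1 + Dp * Dm.

Let ratio : R := sp * sm / sk ^ 2.

(* The weight q_k lies strictly between 0 and 1 because s_1 > 0. *)
Lemma ratio_bounds : 0 < ratio < 1.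
Proof.
  assert (Hsk2 : 0 < sk ^ 2) by nra. unfold ratio. split.
  - apply Rdiv_lt_0_compat; nra.
  - apply Rmult_lt_reg_r with (sk ^ 2); [lra|].
    unfold Rdiv. rewrite Rmult_assoc, Rinv_l by lra. nra.
Qed.

(* Dividing the Ptolemy inequality for D by the equality for the sines:
   (Dk/sk)^2 >= 1 - q + q (Dp/sp)(Dm/sm). *)
Lemma normalized_ptolemy :
  1 - ratio + ratio * ((Dp / sp) * (Dm / sm)) <= (Dk / sk) * (Dk / sk).
Proof.
  assert (Hsk2 : 0 < sk ^ 2) by nra. unfold ratio.
  replace (1 - sp * sm / sk ^ 2 + sp * sm / sk ^ 2 * (Dp / sp * (Dm / sm)))
    with ((sk ^ 2 - sp * sm + Dp * Dm) / sk ^ 2) by (field; lra).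
  replace (sk ^ 2 - sp * sm) with (s1 * s1) by (rewrite sines_eq; ring).
  replace (Dk / sk * (Dk / sk)) with ((Dk * Dk) / sk ^ 2) by (field; lra).
  unfold Rdiv. apply Rmult_le_compat_r; [left; now apply Rinv_0_lt_compat | lra].
Qed.

(* Taking logarithms and using concavity of ln. *)
Lemma log_midpoint_bound :
  ln (Dk / sk) >= ratio * ((ln (Dp / sp) + ln (Dm / sm)) / 2).
Proof.
  assert (Hq := ratio_bounds).
  assert (Hxp : 0 < Dp / sp) by (apply Rdiv_lt_0_compat; assumption).
  assert (Hxm : 0 < Dm / sm) by (apply Rdiv_lt_0_compat; assumption).
  assert (Hxk : 0 < Dk / sk) by (apply Rdiv_lt_0_compat; assumption).
  assert (Hy := Rmult_lt_0_compat _ _ Hxp Hxm).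
  assert (Hqy := Rmult_lt_0_compat _ _ (proj1 Hq) Hy).
  assert (Hconc := ln_concave_chord ratio (Dp / sp * (Dm / sm)) ltac:(lra) Hy).
  assert (Hmono : ln (1 - ratio + ratio * (Dp / sp * (Dm / sm)))
                  <= ln (Dk / sk * (Dk / sk)))
    by (apply ln_le; [lra | exact normalized_ptolemy]).
  rewrite ln_mult in Hconc, Hmono by assumption.
  lra.
Qed.

End OneStep.

Theorem mainTheorem11 (n : nat) (D : nat -> R) :
  (4 <= n)%nat ->
  (forall k : nat, (1 <= k <= n - 1)%nat -> 0 < D k) ->
  (forall j k l : nat, (1 <= j)%nat -> (j < k)%nat -> (k < l)%nat -> (l <= n - 1)%nat ->
     D k * D (l - j)%nat >= D j * D (l - k)%nat + D l * D (k - j)%nat) ->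
  D 1%nat = s n 1 ->
  D (n - 1)%nat = s n 1 ->
  a n D 1 = 0 /\ a n D (n - 1) = 0 /\
  (forall k : nat, (2 <= k <= n - 2)%nat ->
     0 < q n k /\ q n k < 1 /\
     a n D k >= q n k * ((a n D (k + 1) + a n D (k - 1)) / 2)).
Proof.
  intros Hn Hpos Hptolemy HD1 HDn.
  split; [|split].
  - apply a_eq_0; [apply s_pos; lia | exact HD1].
  - apply a_eq_0; rewrite s_sym by lia; [apply s_pos; lia | exact HDn].
  - intros k Hk.
    assert (Hstep := Hptolemy 1%nat k (k + 1)%nat ltac:(lia) ltac:(lia) ltac:(lia) ltac:(lia)).
    replace (k + 1 - 1)%nat with k in Hstep by lia.
    replace (k + 1 - k)%nat with 1%nat in Hstep by lia.
    rewrite HD1 in Hstep.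
    assert (Hsines := s_ptolemy n k ltac:(lia) ltac:(lia)).
    assert (Hs1 : 0 < s n 1) by (apply s_pos; lia).
    assert (Hsm : 0 < s n (k - 1)) by (apply s_pos; lia).
    assert (Hsk : 0 < s n k) by (apply s_pos; lia).
    assert (Hsp : 0 < s n (k + 1)) by (apply s_pos; lia).
    assert (HDm : 0 < D (k - 1)%nat) by (apply Hpos; lia).
    assert (HDk : 0 < D k) by (apply Hpos; lia).
    assert (HDp : 0 < D (k + 1)%nat) by (apply Hpos; lia).
    unfold a, q.
    split; [|split].
    + now apply (ratio_bounds (s n 1)).
    + now apply (ratio_bounds (s n 1)).
    + now apply (log_midpoint_bound (s n 1)).
Qed.
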